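(* Fix $\alpha,\beta>0$, $\Gamma\ge1$, $R\ge1$, $1\le s\le n_2$, $\gamma>0$ and $c\ge1$. Let $\mathcal{A}:\mathbb{R}^{n_1\times n_2}\to\mathbb{R}^m$ be linear and have the additive rank-$2R$ effectively $(n_1,\max\{s,(\gamma/\beta)^2\})$-sparse RIP$_{(c+1)\Gamma}$ with constant $0<\delta<1$. Let $\hat X=\sum_{r=1}^R\hat u^r(\hat v^r)^T$ have rank $R$, where $\|\hat v^r\|_1\le\sqrt s\,\|\hat v^r\|_2$ for all $r$ and $\sum_{r=1}^R\|\hat u^r\|_2^2\|\hat v^r\|_2^2\le\Gamma^2$ (so $\hat X\in K^{R,\Gamma}_{n_1,s}$), and let $c_{\hat U}>0$ be a constant with $\sum_{r=1}^R(\|\hat u^r\|_2\|\hat v^r\|_2)^{2/3}\le c_{\hat U}R^{2/3}\|\hat X\|_{2/3}^{2/3}$. Let $\eta\in\mathbb{R}^m$, $y=\mathcal{A}(\hat X)+\eta$. Then for any global minimizer $(u^1_{\alpha,\beta},\dots,v^R_{\alpha,\beta})$ of $J^R_{\alpha,\beta}$ satisfying $\|v^r_{\alpha,\beta}\|_2\ge(\|\hat X\|_F+\|\eta\|_2+\sqrt\delta)^2/\gamma$ for all $r\in[R]$ and $\|\sigma_{\alpha,\beta}\|_2\le c\Gamma$, where $(\sigma_{\alpha,\beta})_r=\|u^r_{\alpha,\beta}\|_2\|v^r_{\alpha,\beta}\|_2$, one has $$\|\hat X-X_{\alpha,\beta}\|_F\le\sqrt{s^{1/3}R^{2/3}C_{2,1}c_{\hat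 U}}\;\sqrt[6]{\alpha\beta^2}\;\|\hat X\|_{2/3}^{1/3}+2\|\eta\|_2+\sqrt\delta,$$ where $X_{\alpha,\beta}=\sum_{r=1}^Ru^r_{\alpha,\beta}(v^r_{\alpha,\beta})^T$. Moreover, in this case $X_{\alpha,\beta}\in K^{R,c\Gamma}_{n_1,(\gamma/\beta)^2}$, via the decomposition $X_{\alpha,\beta}=\sum_r(\sigma_{\alpha,\beta})_r\frac{u^r_{\alpha,\beta}}{\|u^r_{\alpha,\beta}\|_2}\big(\frac{v^r_{\alpha,\beta}}{\|v^r_{\alpha,\beta}\|_2}\big)^T$.
   Context: For $y\in\mathbb{R}^m$ and $\alpha,\beta>0$, $J^R_{\alpha,\beta}(u^1,\dots,u^R,v^1,\dots,v^R)=\|y-\mathcal{A}(\sum_{r=1}^Ru^r(v^r)^T)\|_2^2+\alpha\sum_r\|u^r\|_2^2+\beta\sum_r\|v^r\|_1$ on $(\mathbb{R}^{n_1})^R\times(\mathbb{R}^{n_2})^R$. $C_{2,1}=(1/2)^{2/3}+2^{1/3}$. For $0<p<\infty$, $\|Z\|_p$ is the Schatten-$p$ (quasi-)norm, i.e. the $\ell_p$-(quasi-)norm of the vector of singular values of $Z$; $\|\cdot\|_F$ is the Frobenius norm. For $n\ge1$, $s>0$: $K_{n,s}=\{z\in\mathbb{R}^n:\|z\|_2\le1,\ \|z\|_1\le\sqrt s\}$. For $R\ge1,\Gamma\ge1$: $K^{R,\Gamma}_{s_1,s_2}$ is the set of $Z\in\mathbb{R}^{n_1\times n_2}$ of the form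 $Z=\sum_{r=1}^R\sigma_ru^r(v^r)^T$ with $u^r\in K_{n_1,s_1}$, $v^r\in K_{n_2,s_2}$, $\|u^r\|_2=\|v^r\|_2=1$, and $\|\sigma\|_2\le\Gamma$. A linear $\mathcal{A}$ has the additive rank-$R$ effectively $(s_1,s_2)$-sparse RIP$_\Gamma$ with constant $\delta>0$ if $|\|\mathcal{A}(Z)\|_2^2-\|Z\|_F^2|\le\delta$ for all $Z\in K^{R,\Gamma}_{s_1,s_2}$. *)

From Stdlib Require Import Reals Lra.
Open Scope R_scope.

(* vectors in R^n : nat -> R (only indices < n matter);
   matrices in R^{n1 x n2} : nat -> nat -> R;
   families of R vectors u^1..u^R : nat -> nat -> R  (u r i = i-th entry of u^{r+1}). *)

Fixpoint fsum (n : nat) (f : nat -> R) : R :=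
  match n with O => 0 | S k => fsum k f + f k end.

(* power with the convention 0^p = 0 (p > 0), used for (quasi-)norms *)
Definition rpow (x p : R) : R := if Rle_dec x 0 then 0 else Rpower x p.

Definition norm2 (n : nat) (u : nat -> R) : R := sqrt (fsum n (fun i => u i ^ 2)).
Definition norm1 (n : nat) (u : nat -> R) : R := fsum n (fun i => Rabs (u i)).
Definition frob (n1 n2 : nat) (Z : nat -> nat -> R) : R :=
  sqrt (fsum n1 (fun i => fsum n2 (fun j => Z i j ^ 2))).

Definition outer_sum (Rk : nat) (U V : nat -> nat -> R) : nat -> nat -> R :=
  fun i j => fsum Rk (fun r => U r i * V r j).

Definition Aop (n1 n2 : nat) (a : nat -> nat -> nat -> R) (Z : nat -> nat -> R) : nat -> R :=
  fun k => fsum n1 (fun i => fsum n2 (fun j => a k i j * Z i j)).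

Definition mat_eq (n1 n2 : nat) (Z W : nat -> nat -> R) : Prop :=
  forall i j, (i < n1)%nat -> (j < n2)%nat -> Z i j = W i j.

Definition rank_le (n1 n2 : nat) (Z : nat -> nat -> R) (r : nat) : Prop :=
  exists U V : nat -> nat -> R, mat_eq n1 n2 Z (outer_sum r U V).
Definition has_rank (n1 n2 : nat) (Z : nat -> nat -> R) (r : nat) : Prop :=
  rank_le n1 n2 Z r /\ forall r', (r' < r)%nat -> ~ rank_le n1 n2 Z r'.

Definition orthonormal (n k : nat) (P : nat -> nat -> R) : Prop :=
  forall a b, (a < k)%nat -> (b < k)%nat ->
    fsum n (fun i => P a i * P b i) = if Nat.eq_dec a b then 1 else 0.

(* N is the Schatten-p (quasi-)norm of Z: for a singular value decomposition
   Z = sum_i sigma_i p_i q_i^T (sigma_i >= 0, orthonormal p's and q's),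
   N = (sum_i sigma_i^p)^(1/p).  (Nonzero singular values are unique.) *)
Definition is_schatten (n1 n2 : nat) (Z : nat -> nat -> R) (p N : R) : Prop :=
  exists (k : nat) (sigma : nat -> R) (P Q : nat -> nat -> R),
    (forall i, (i < k)%nat -> 0 <= sigma i) /\
    orthonormal n1 k P /\ orthonormal n2 k Q /\
    mat_eq n1 n2 Z (fun i j => fsum k (fun l => sigma l * P l i * Q l j)) /\
    N = rpow (fsum k (fun l => rpow (sigma l) p)) (1 / p).

Definition inK (n : nat) (s : R) (z : nat -> R) : Prop :=
  norm2 n z <= 1 /\ norm1 n z <= sqrt s.

Definition inKR (n1 n2 Rk : nat) (Gamma s1 s2 : R) (Z : nat -> nat -> R) : Prop :=
  exists (sigma : nat -> R) (U V : nat -> nat -> R),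
    (forall r, (r < Rk)%nat ->
       inK n1 s1 (U r) /\ inK n2 s2 (V r) /\ norm2 n1 (U r) = 1 /\ norm2 n2 (V r) = 1) /\
    sqrt (fsum Rk (fun r => sigma r ^ 2)) <= Gamma /\
    mat_eq n1 n2 Z (fun i j => fsum Rk (fun r => sigma r * U r i * V r j)).

Definition RIP (m n1 n2 : nat) (a : nat -> nat -> nat -> R)
    (Rk : nat) (s1 s2 Gamma delta : R) : Prop :=
  forall Z, inKR n1 n2 Rk Gamma s1 s2 Z ->
    Rabs (norm2 m (Aop n1 n2 a Z) ^ 2 - frob n1 n2 Z ^ 2) <= delta.

Definition J (m n1 n2 Rk : nat) (a : nat -> nat -> nat -> R) (y : nat -> R)
    (alpha beta : R) (U V : nat -> nat -> R) : R :=
  norm2 m (fun k => y k - Aop n1 n2 a (outer_sum Rk U V) k) ^ 2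
  + alpha * fsum Rk (fun r => norm2 n1 (U r) ^ 2)
  + beta * fsum Rk (fun r => norm1 n2 (V r)).

Definition C21 : R := Rpower (1/2) (2/3) + Rpower 2 (1/3).

(* Rescaling each rank-one term u^r (v^r)^T of the ground truth to the optimal balance between
   alpha ||u||_2^2 and beta ||v||_1 gives a competitor for J whose residual is the noise eta and
   whose penalty is at most C_{2,1} (alpha beta^2 s)^(1/3) sum_r (||u^r||_2 ||v^r||_2)^(2/3).
   Comparing J at the minimiser with J at zero bounds every ||v^r||_1, and the lower bound on
   ||v^r||_2 turns this into effective sparsity (gamma/beta)^2 of the normalised factors.  Hence
   Xhat - X lies in K^{2R,(c+1)Gamma}, where the RIP makes ||A(Xhat - X)||_2 and
   ||Xhat - X||_F agree up to sqrt delta, while comparing J at the minimiser with J at the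
   competitor bounds ||A(Xhat - X)||_2 through a quadratic inequality. *)

From Stdlib Require Import Reals Lra Lia FunctionalExtensionality.
Open Scope R_scope.

(** * Finite sums *)

Lemma fsum_ext n f g : (forall i, (i < n)%nat -> f i = g i) -> fsum n f = fsum n g.
Proof. induction n as [|n IH]; simpl; intros H; auto. rewrite IH, H; auto. Qed.

Lemma fsum_plus n f g : fsum n (fun i => f i + g i) = fsum n f + fsum n g.
Proof. induction n as [|n IH]; simpl; [ring | rewrite IH; ring]. Qed.

Lemma fsum_minus n f g : fsum n (fun i => f i - g i) = fsum n f - fsum n g.
Proof. induction n as [|n IH]; simpl; [ring | rewrite IH; ring]. Qed.

Lemma fsum_mult_l n c f : fsum n (fun i => c * f i) = c * fsum n f.
Proof. induction n as [|n IH]; simpl; [ring | rewrite IH; ring]. Qed.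

Lemma fsum_zero n : fsum n (fun _ => 0) = 0.
Proof. induction n as [|n IH]; simpl; [ring | rewrite IH; ring]. Qed.

Lemma fsum_const n c : fsum n (fun _ => c) = INR n * c.
Proof. induction n as [|n IH]; cbn [fsum]; [simpl; ring | rewrite IH, S_INR; ring]. Qed.

Lemma fsum_nonneg n f : (forall i, (i < n)%nat -> 0 <= f i) -> 0 <= fsum n f.
Proof.
  induction n as [|n IH]; simpl; intros H; [lra|].
  assert (0 <= f n) by auto. assert (0 <= fsum n f) by auto. lra.
Qed.

Lemma fsum_le n f g : (forall i, (i < n)%nat -> f i <= g i) -> fsum n f <= fsum n g.
Proof.
  induction n as [|n IH]; simpl; intros H; [lra|].
  assert (f n <= g n) by auto. assert (fsum n f <= fsum n g) by auto. lra.
Qed.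

Lemma fsum_term_le n f k :
  (forall i, (i < n)%nat -> 0 <= f i) -> (k < n)%nat -> f k <= fsum n f.
Proof.
  induction n as [|n IH]; simpl; intros H Hk; [lia|].
  destruct (Nat.eq_dec k n) as [->|Hkn].
  - assert (0 <= fsum n f) by (apply fsum_nonneg; auto). lra.
  - assert (f k <= fsum n f) by (apply IH; auto; lia). assert (0 <= f n) by auto. lra.
Qed.

Lemma fsum_nonneg_eq0 n f k :
  (forall i, (i < n)%nat -> 0 <= f i) -> fsum n f = 0 -> (k < n)%nat -> f k = 0.
Proof. intros H E Hk. pose proof (fsum_term_le n f k H Hk). pose proof (H k Hk). lra. Qed.

Lemma fsum_add_range n m f : fsum (n + m) f = fsum n f + fsum m (fun i => f (n + i)%nat).
Proof.
  induction m as [|m IH]; simpl.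
  - rewrite Nat.add_0_r. ring.
  - rewrite Nat.add_succ_r. simpl. rewrite IH. ring.
Qed.

Lemma fsum_first_only n f :
  (1 <= n)%nat -> f 0%nat = 1 -> (forall i, i <> 0%nat -> f i = 0) -> fsum n f = 1.
Proof.
  induction n as [|[|n] IH]; intros Hn H0 H; [lia | simpl; rewrite H0; ring |].
  simpl fsum. simpl fsum in IH. rewrite IH by (auto; lia). rewrite H by lia. ring.
Qed.

Lemma fsum_Cauchy_Schwarz n x y :
  fsum n (fun i => x i * y i) ^ 2 <= fsum n (fun i => x i ^ 2) * fsum n (fun i => y i ^ 2).
Proof.
  set (A := fsum n (fun i => x i ^ 2)). set (B := fsum n (fun i => x i * y i)).
  set (C := fsum n (fun i => y i ^ 2)).
  assert (Hsq : forall p q, 0 <= fsum n (fun i => (p * x i + q * y i) ^ 2)).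
  { intros p q. apply fsum_nonneg. intros; apply pow2_ge_0. }
  assert (Hexp : forall p q,
            fsum n (fun i => (p * x i + q * y i) ^ 2) = p ^ 2 * A + 2 * p * q * B + q ^ 2 * C).
  { intros p q. unfold A, B, C. rewrite <- !fsum_mult_l, <- !fsum_plus.
    apply fsum_ext; intros; ring. }
  (* The form is nonnegative at (C, -B), (B, -A) and (1, -B): these cover C > 0, A > 0 and
     A = C = 0 respectively. *)
  pose proof (Hsq C (- B)) as H1. pose proof (Hsq B (- A)) as H2.
  pose proof (Hsq 1 (- B)) as H3. rewrite Hexp in H1, H2, H3.
  assert (0 <= A) by (apply fsum_nonneg; intros; apply pow2_ge_0).
  assert (0 <= C) by (apply fsum_nonneg; intros; apply pow2_ge_0).
  destruct (Req_dec C 0) as [HC|HC]; [destruct (Req_dec A 0) as [HA|HA] |]; nra.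
Qed.

Lemma fsum_sq_le_sq_fsum_abs n f :
  fsum n (fun i => f i ^ 2) <= fsum n (fun i => Rabs (f i)) ^ 2.
Proof.
  induction n as [|n IH]; cbn [fsum]; [lra|].
  assert (0 <= fsum n (fun i => Rabs (f i))) by (apply fsum_nonneg; intros; apply Rabs_pos).
  pose proof (Rabs_pos (f n)). rewrite <- (pow2_abs (f n)). nra.
Qed.

Lemma le_of_pow2_le x y : 0 <= y -> x ^ 2 <= y ^ 2 -> x <= y.
Proof. intros Hy H. destruct (Rle_dec x y); [auto | nra]. Qed.

Lemma norm2_nonneg n u : 0 <= norm2 n u.
Proof. apply sqrt_pos. Qed.

Lemma norm1_nonneg n u : 0 <= norm1 n u.
Proof. apply fsum_nonneg; intros; apply Rabs_pos. Qed.

Lemma norm2_sq n u : norm2 n u ^ 2 = fsum n (fun i => u i ^ 2).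
Proof. apply pow2_sqrt, fsum_nonneg; intros; apply pow2_ge_0. Qed.

Lemma norm2_zero_vec n : norm2 n (fun _ => 0) = 0.
Proof.
  unfold norm2. rewrite (fsum_ext n _ (fun _ => 0)) by (intros; ring). rewrite fsum_zero.
  apply sqrt_0.
Qed.

Lemma norm1_zero_vec n : norm1 n (fun _ => 0) = 0.
Proof.
  unfold norm1. rewrite (fsum_ext n _ (fun _ => 0)) by (intros; apply Rabs_R0).
  apply fsum_zero.
Qed.

Lemma norm2_eq0 n u i : norm2 n u = 0 -> (i < n)%nat -> u i = 0.
Proof.
  intros H Hi.
  assert (Hsq : fsum n (fun i => u i ^ 2) = 0) by (rewrite <- norm2_sq, H; ring).
  assert (u i ^ 2 = 0).
  { apply (fsum_nonneg_eq0 n (fun i => u i ^ 2)); auto. intros; apply pow2_ge_0. }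
  nra.
Qed.

Lemma dot_le_norm2 n x y : fsum n (fun i => x i * y i) <= norm2 n x * norm2 n y.
Proof.
  apply le_of_pow2_le.
  - apply Rmult_le_pos; apply norm2_nonneg.
  - rewrite Rpow_mult_distr, !norm2_sq. apply fsum_Cauchy_Schwarz.
Qed.

Lemma norm2_add_sq n x y :
  norm2 n (fun i => x i + y i) ^ 2
  = norm2 n x ^ 2 + 2 * fsum n (fun i => x i * y i) + norm2 n y ^ 2.
Proof. rewrite !norm2_sq, <- fsum_mult_l, <- !fsum_plus. apply fsum_ext; intros; ring. Qed.

Lemma norm2_triangle n x y : norm2 n (fun i => x i + y i) <= norm2 n x + norm2 n y.
Proof.
  apply le_of_pow2_le.
  - pose proof (norm2_nonneg n x). pose proof (norm2_nonneg n y). lra.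
  - rewrite norm2_add_sq. pose proof (dot_le_norm2 n x y). nra.
Qed.

Lemma norm2_add_sq_sub_ge n x y :
  norm2 n x ^ 2 - 2 * norm2 n x * norm2 n y
  <= norm2 n (fun i => x i + y i) ^ 2 - norm2 n y ^ 2.
Proof.
  rewrite norm2_add_sq. pose proof (dot_le_norm2 n (fun i => - x i) y) as H.
  rewrite (fsum_ext n _ (fun i => -1 * (x i * y i))) in H by (intros; ring).
  rewrite fsum_mult_l in H.
  replace (norm2 n (fun i => - x i)) with (norm2 n x) in H
    by (unfold norm2; f_equal; apply fsum_ext; intros; ring).
  lra.
Qed.

Lemma norm2_scal n c u : norm2 n (fun i => c * u i) = Rabs c * norm2 n u.
Proof.
  unfold norm2. rewrite (fsum_ext n _ (fun i => c ^ 2 * u i ^ 2)) by (intros; ring).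
  rewrite fsum_mult_l, sqrt_mult
    by (apply pow2_ge_0 || (apply fsum_nonneg; intros; apply pow2_ge_0)).
  rewrite <- (pow2_abs c), sqrt_pow2 by apply Rabs_pos. reflexivity.
Qed.

Lemma norm1_scal n c u : norm1 n (fun i => c * u i) = Rabs c * norm1 n u.
Proof. unfold norm1. rewrite <- fsum_mult_l. apply fsum_ext; intros; apply Rabs_mult. Qed.

Lemma norm2_div n u d : 0 < d -> norm2 n (fun i => u i / d) = norm2 n u / d.
Proof.
  intros Hd. rewrite (functional_extensionality _ (fun i => / d * u i)) by (intros; field; lra).
  rewrite norm2_scal, Rabs_right by (left; apply Rinv_0_lt_compat; auto). field; lra.
Qed.

Lemma norm1_div n u d : 0 < d -> norm1 n (fun i => u i / d) = norm1 n u / d.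
Proof.
  intros Hd. rewrite (functional_extensionality _ (fun i => / d * u i)) by (intros; field; lra).
  rewrite norm1_scal, Rabs_right by (left; apply Rinv_0_lt_compat; auto). field; lra.
Qed.

Lemma norm2_le_norm1 n u : norm2 n u <= norm1 n u.
Proof.
  apply le_of_pow2_le; [apply norm1_nonneg|].
  rewrite norm2_sq. apply fsum_sq_le_sq_fsum_abs.
Qed.

Lemma norm1_le_sqrt_dim n u : norm1 n u <= sqrt (INR n) * norm2 n u.
Proof.
  apply le_of_pow2_le.
  - apply Rmult_le_pos; [apply sqrt_pos | apply norm2_nonneg].
  - pose proof (fsum_Cauchy_Schwarz n (fun i => Rabs (u i)) (fun _ => 1)) as H.
    cbv beta in H.
    rewrite (fsum_ext n (fun i => Rabs (u i) * 1) (fun i => Rabs (u i))) in H by (intros; ring).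
    rewrite (fsum_ext n (fun i => Rabs (u i) ^ 2) (fun i => u i ^ 2)) in H
      by (intros; apply pow2_abs).
    rewrite fsum_const, pow1, Rmult_1_r, <- norm2_sq in H. fold (norm1 n u) in H.
    rewrite Rpow_mult_distr, pow2_sqrt by apply pos_INR. lra.
Qed.

Definition e0 : nat -> R := fun i => if Nat.eq_dec i 0 then 1 else 0.

(* The zero vector is sent to [e0], so that [normalize] always returns a unit vector. *)
Definition normalize (n : nat) (u : nat -> R) : nat -> R :=
  if Req_EM_T (norm2 n u) 0 then e0 else fun i => u i / norm2 n u.

Lemma norm2_e0 n : (1 <= n)%nat -> norm2 n e0 = 1.
Proof.
  intros Hn. unfold norm2. rewrite fsum_first_only; [apply sqrt_1 | auto | |].
  - unfold e0; simpl; ring.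
  - intros i Hi; unfold e0; destruct (Nat.eq_dec i 0); [lia | ring].
Qed.

Lemma norm1_e0 n : (1 <= n)%nat -> norm1 n e0 = 1.
Proof.
  intros Hn. unfold norm1. apply fsum_first_only; auto.
  - unfold e0; simpl; apply Rabs_R1.
  - intros i Hi; unfold e0; destruct (Nat.eq_dec i 0); [lia | apply Rabs_R0].
Qed.

Lemma norm2_normalize n u : (1 <= n)%nat -> norm2 n (normalize n u) = 1.
Proof.
  intros Hn. unfold normalize. destruct (Req_EM_T (norm2 n u) 0) as [_|H].
  - apply norm2_e0; auto.
  - pose proof (norm2_nonneg n u). rewrite norm2_div by lra. field; auto.
Qed.

Lemma normalize_spec n u i : (i < n)%nat -> u i = norm2 n u * normalize n u i.
Proof.
  intros Hi. unfold normalize. destruct (Req_EM_T (norm2 n u) 0) as [H|H].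
  - rewrite H, (norm2_eq0 n u i H Hi). ring.
  - field; auto.
Qed.

Lemma one_le_of_norm1_le_mul_norm2 n v k : 0 < norm2 n v -> norm1 n v <= k * norm2 n v -> 1 <= k.
Proof.
  intros Hv H. pose proof (norm2_le_norm1 n v).
  apply Rmult_le_reg_r with (norm2 n v); lra.
Qed.

Lemma inK_mono n s s' z : s <= s' -> inK n s z -> inK n s' z.
Proof.
  intros Hs [H2 H1]. split; auto. apply Rle_trans with (sqrt s); auto. apply sqrt_le_1_alt; auto.
Qed.

Lemma inK_div_norm2 n s u :
  0 < norm2 n u -> norm1 n u <= sqrt s * norm2 n u -> inK n s (fun i => u i / norm2 n u).
Proof.
  intros Hu H. split.
  - rewrite norm2_div by auto. right; field; lra.
  - rewrite norm1_div by auto. apply Rmult_le_reg_r with (norm2 n u); auto.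
    unfold Rdiv. rewrite Rmult_assoc, Rinv_l; lra.
Qed.

Lemma inK_normalize n s u :
  (1 <= n)%nat -> 1 <= s -> norm1 n u <= sqrt s * norm2 n u -> inK n s (normalize n u).
Proof.
  intros Hn Hs H. unfold normalize. destruct (Req_EM_T (norm2 n u) 0) as [H0|H0].
  - split; [rewrite norm2_e0 by auto; lra|].
    rewrite norm1_e0, <- sqrt_1 by auto. apply sqrt_le_1_alt; auto.
  - apply inK_div_norm2; auto. pose proof (norm2_nonneg n u). lra.
Qed.

(** * The sets K^{R,Gamma}_{s1,s2} *)

Definition concat {A : Type} (k : nat) (f g : nat -> A) : nat -> A :=
  fun r => if Compare_dec.lt_dec r k then f r else g (r - k)%nat.

Lemma concat_l {A : Type} k (f g : nat -> A) r : (r < k)%nat -> concat k f g r = f r.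
Proof. intros H. unfold concat. destruct (Compare_dec.lt_dec r k); [auto | lia]. Qed.

Lemma concat_r {A : Type} k (f g : nat -> A) r : concat k f g (k + r) = g r.
Proof.
  unfold concat. destruct (Compare_dec.lt_dec (k + r) k); [lia|]. f_equal; lia.
Qed.

Lemma fsum_concat k F (f g : nat -> R) :
  fsum (k + k) (fun r => F r (concat k f g r))
  = fsum k (fun r => F r (f r)) + fsum k (fun r => F (k + r)%nat (g r)).
Proof.
  rewrite fsum_add_range. f_equal.
  - apply fsum_ext; intros; rewrite concat_l; auto.
  - apply fsum_ext; intros; rewrite concat_r; auto.
Qed.

Lemma inKR_ext n1 n2 Rk G s1 s2 Z W :
  mat_eq n1 n2 Z W -> inKR n1 n2 Rk G s1 s2 Z -> inKR n1 n2 Rk G s1 s2 W.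
Proof.
  intros HZW (sigma & U & V & HUV & Hsig & HZ). exists sigma, U, V.
  split; [|split]; auto. intros i j Hi Hj. rewrite <- HZW; auto.
Qed.

Lemma inKR_mono n1 n2 Rk G G' s1 s2 s2' Z :
  G <= G' -> s2 <= s2' -> inKR n1 n2 Rk G s1 s2 Z -> inKR n1 n2 Rk G' s1 s2' Z.
Proof.
  intros HG Hs (sigma & U & V & HUV & Hsig & HZ). exists sigma, U, V.
  split; [|split; [lra | auto]].
  intros r Hr. destruct (HUV r Hr) as (HU & HV & H). split; [|split]; auto.
  apply inK_mono with s2; auto.
Qed.

Lemma inKR_scal n1 n2 Rk G s1 s2 t Z :
  inKR n1 n2 Rk G s1 s2 Z -> inKR n1 n2 Rk (Rabs t * G) s1 s2 (fun i j => t * Z i j).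
Proof.
  intros (sigma & U & V & HUV & Hsig & HZ). exists (fun r => t * sigma r), U, V.
  split; [|split]; auto.
  - fold (norm2 Rk (fun r => t * sigma r)). rewrite norm2_scal.
    apply Rmult_le_compat_l; [apply Rabs_pos | auto].
  - intros i j Hi Hj. rewrite HZ by auto. rewrite <- fsum_mult_l. apply fsum_ext; intros; ring.
Qed.

Lemma inKR_add n1 n2 Rk G1 G2 s1 s2 Z1 Z2 :
  inKR n1 n2 Rk G1 s1 s2 Z1 -> inKR n1 n2 Rk G2 s1 s2 Z2 ->
  inKR n1 n2 (2 * Rk) (G1 + G2) s1 s2 (fun i j => Z1 i j + Z2 i j).
Proof.
  intros (sg1 & U1 & V1 & HUV1 & Hsg1 & HZ1) (sg2 & U2 & V2 & HUV2 & Hsg2 & HZ2).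
  replace (2 * Rk)%nat with (Rk + Rk)%nat by lia.
  exists (concat Rk sg1 sg2), (concat Rk U1 U2), (concat Rk V1 V2). split; [|split].
  - intros r Hr. unfold concat. destruct (Compare_dec.lt_dec r Rk); [auto | apply HUV2; lia].
  - rewrite (fsum_concat Rk (fun _ x => x ^ 2)).
    fold (norm2 Rk sg1) (norm2 Rk sg2) in *. rewrite <- !norm2_sq.
    pose proof (norm2_nonneg Rk sg1). pose proof (norm2_nonneg Rk sg2).
    apply le_of_pow2_le; [lra|]. rewrite pow2_sqrt by nra. nra.
  - intros i j Hi Hj. rewrite HZ1, HZ2 by auto. rewrite fsum_add_range. f_equal.
    + apply fsum_ext; intros; rewrite !concat_l; auto.
    + apply fsum_ext; intros; rewrite !concat_r; auto.
Qed.

Lemma inKR_sub n1 n2 Rk G1 G2 s1 s2 Z1 Z2 :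
  inKR n1 n2 Rk G1 s1 s2 Z1 -> inKR n1 n2 Rk G2 s1 s2 Z2 ->
  inKR n1 n2 (2 * Rk) (G1 + G2) s1 s2 (fun i j => Z1 i j - Z2 i j).
Proof.
  intros H1 H2. apply (inKR_ext _ _ _ _ _ _ (fun i j => Z1 i j + -1 * Z2 i j)).
  - intros i j _ _. ring.
  - replace G2 with (Rabs (-1) * G2) by (rewrite Rabs_left; lra).
    apply inKR_add; auto. apply inKR_scal; auto.
Qed.

Lemma inKR_double_rank n1 n2 Rk G s1 s2 Z :
  inKR n1 n2 Rk G s1 s2 Z -> inKR n1 n2 (2 * Rk) G s1 s2 Z.
Proof.
  intros H. apply (inKR_ext _ _ _ _ _ _ (fun i j => Z i j - 0 * Z i j)).
  - intros i j _ _. ring.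
  - replace G with (G + Rabs 0 * G) at 1 by (rewrite Rabs_R0; ring).
    apply inKR_sub, inKR_scal; auto.
Qed.

Lemma inKR_outer_sum n1 n2 Rk G s U V :
  (1 <= n1)%nat -> (1 <= n2)%nat -> 1 <= s ->
  (forall r, (r < Rk)%nat -> norm1 n2 (V r) <= sqrt s * norm2 n2 (V r)) ->
  sqrt (fsum Rk (fun r => (norm2 n1 (U r) * norm2 n2 (V r)) ^ 2)) <= G ->
  inKR n1 n2 Rk G (INR n1) s (outer_sum Rk U V).
Proof.
  intros Hn1 Hn2 Hs HV HG.
  exists (fun r => norm2 n1 (U r) * norm2 n2 (V r)),
         (fun r => normalize n1 (U r)), (fun r => normalize n2 (V r)).
  split; [|split]; auto.
  - intros r Hr. rewrite !norm2_normalize by auto. split; [|split; [|split]]; auto.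
    + apply inK_normalize; auto.
      * apply (le_INR 1); auto.
      * apply norm1_le_sqrt_dim.
    + apply inK_normalize; auto.
  - intros i j Hi Hj. apply fsum_ext; intros r Hr.
    rewrite (normalize_spec n1 (U r) i), (normalize_spec n2 (V r) j) by auto. ring.
Qed.

Lemma has_rank_rows_pos n1 n2 Z r : has_rank n1 n2 Z r -> (1 <= r)%nat -> (1 <= n1)%nat.
Proof.
  intros [_ Hmin] Hr. destruct n1; [|lia]. exfalso. apply (Hmin 0%nat); [lia|].
  exists (fun _ _ => 0), (fun _ _ => 0). intros i j Hi. lia.
Qed.

Lemma le_plus_sqrt_of_Rabs_pow2_sub x y d :
  0 <= x -> 0 <= y -> 0 <= d -> Rabs (x ^ 2 - y ^ 2) <= d -> x <= y + sqrt d.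
Proof.
  intros Hx Hy Hd H. pose proof (Rle_abs (x ^ 2 - y ^ 2)).
  pose proof (sqrt_pos d). pose proof (pow2_sqrt d Hd).
  apply le_of_pow2_le; nra.
Qed.

Lemma RIP_norm2_le {m n1 n2 a Rk s1 s2 G delta} Z :
  RIP m n1 n2 a Rk s1 s2 G delta -> 0 <= delta -> inKR n1 n2 Rk G s1 s2 Z ->
  norm2 m (Aop n1 n2 a Z) <= frob n1 n2 Z + sqrt delta
  /\ frob n1 n2 Z <= norm2 m (Aop n1 n2 a Z) + sqrt delta.
Proof.
  intros HRIP Hd HZ. specialize (HRIP Z HZ).
  pose proof (norm2_nonneg m (Aop n1 n2 a Z)).
  assert (0 <= frob n1 n2 Z) by apply sqrt_pos.
  split; apply le_plus_sqrt_of_Rabs_pow2_sub; auto. rewrite Rabs_minus_sym; auto.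
Qed.

Lemma Aop_ext n1 n2 a Z W : mat_eq n1 n2 Z W -> Aop n1 n2 a Z = Aop n1 n2 a W.
Proof.
  intros H. apply functional_extensionality. intros k. unfold Aop.
  apply fsum_ext; intros. apply fsum_ext; intros. rewrite H; auto.
Qed.

Lemma Aop_sub n1 n2 a Z W k :
  Aop n1 n2 a (fun i j => Z i j - W i j) k = Aop n1 n2 a Z k - Aop n1 n2 a W k.
Proof.
  unfold Aop. rewrite <- fsum_minus. apply fsum_ext. intros.
  rewrite <- fsum_minus. apply fsum_ext. intros. ring.
Qed.

Lemma Aop_zero n1 n2 a k : Aop n1 n2 a (fun _ _ => 0) k = 0.
Proof.
  unfold Aop. rewrite (fsum_ext n1 _ (fun _ => 0)); [apply fsum_zero|].
  intros. rewrite (fsum_ext n2 _ (fun _ => 0)) by (intros; ring). apply fsum_zero.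
Qed.

Section Objective.

Variables (m n1 n2 Rk : nat) (a : nat -> nat -> nat -> R) (y : nat -> R) (alpha beta : R).
Hypotheses (Halpha : 0 < alpha) (Hbeta : 0 < beta).

Let residual U V := fun k => y k - Aop n1 n2 a (outer_sum Rk U V) k.

Lemma J_zero : J m n1 n2 Rk a y alpha beta (fun _ _ => 0) (fun _ _ => 0) = norm2 m y ^ 2.
Proof.
  unfold J. rewrite (Aop_ext n1 n2 a _ (fun _ _ => 0)).
  - rewrite (functional_extensionality (fun k => y k - Aop n1 n2 a (fun _ _ => 0) k) y)
      by (intros; rewrite Aop_zero; ring).
    rewrite norm2_zero_vec, norm1_zero_vec, !fsum_const. ring.
  - intros i j _ _. unfold outer_sum.
    rewrite (fsum_ext Rk _ (fun _ => 0)) by (intros; ring). apply fsum_zero.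
Qed.

Lemma residual_sq_le_J U V : norm2 m (residual U V) ^ 2 <= J m n1 n2 Rk a y alpha beta U V.
Proof.
  unfold J. fold (residual U V).
  assert (0 <= fsum Rk (fun r => norm2 n1 (U r) ^ 2))
    by (apply fsum_nonneg; intros; apply pow2_ge_0).
  assert (0 <= fsum Rk (fun r => norm1 n2 (V r)))
    by (apply fsum_nonneg; intros; apply norm1_nonneg).
  nra.
Qed.

Lemma norm1_factor_le_J U V r :
  (r < Rk)%nat -> beta * norm1 n2 (V r) <= J m n1 n2 Rk a y alpha beta U V.
Proof.
  intros Hr. unfold J.
  assert (0 <= fsum Rk (fun r => norm2 n1 (U r) ^ 2))
    by (apply fsum_nonneg; intros; apply pow2_ge_0).
  assert (norm1 n2 (V r) <= fsum Rk (fun r => norm1 n2 (V r))).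
  { apply (fsum_term_le Rk (fun r => norm1 n2 (V r))); auto. intros; apply norm1_nonneg. }
  pose proof (pow2_ge_0 (norm2 m (residual U V))). fold (residual U V). nra.
Qed.

(* Comparison with J at zero: ||v^r||_1 <= ||y||^2 / beta <= M^2 / beta. *)
Lemma minimizer_factor_sparse U V gamma M :
  (forall U' V', J m n1 n2 Rk a y alpha beta U V <= J m n1 n2 Rk a y alpha beta U' V') ->
  0 < gamma -> 0 < M -> norm2 m y <= M ->
  forall r, (r < Rk)%nat -> norm2 n2 (V r) >= M ^ 2 / gamma ->
  0 < norm2 n2 (V r) /\ norm1 n2 (V r) <= gamma / beta * norm2 n2 (V r).
Proof.
  intros Hmin Hgamma HM Hy r Hr HV.
  assert (0 < M ^ 2 / gamma) by (apply Rdiv_lt_0_compat; nra). split; [lra|].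
  pose proof (norm1_factor_le_J U V r Hr). pose proof (Hmin (fun _ _ => 0) (fun _ _ => 0)).
  rewrite J_zero in *. pose proof (norm2_nonneg m y).
  apply Rmult_le_reg_l with beta; auto.
  replace (beta * (gamma / beta * norm2 n2 (V r))) with (gamma * norm2 n2 (V r)) by (field; lra).
  apply Rle_trans with (M ^ 2); [nra|].
  apply Rmult_le_reg_r with (/ gamma); [apply Rinv_0_lt_compat; auto|].
  replace (gamma * norm2 n2 (V r) * / gamma) with (norm2 n2 (V r)) by (field; lra). lra.
Qed.

Lemma error_image_quadratic_le U V Xhat eta K :
  (forall k, y k = Aop n1 n2 a Xhat k + eta k) ->
  J m n1 n2 Rk a y alpha beta U V <= norm2 m eta ^ 2 + K ->
  let w := Aop n1 n2 a (fun i j => Xhat i j - outer_sum Rk U V i j) in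
  norm2 m w ^ 2 - 2 * norm2 m w * norm2 m eta <= K.
Proof.
  intros Hy HJ w. pose proof (residual_sq_le_J U V).
  replace (residual U V) with (fun k => w k + eta k) in *.
  - pose proof (norm2_add_sq_sub_ge m w eta). lra.
  - apply functional_extensionality. intros k. unfold w, residual. rewrite Aop_sub, Hy. ring.
Qed.

End Objective.

(** * Rescaling a rank-one term *)

Lemma C21_pos : 0 < C21.
Proof.
  unfold C21, Rpower.
  pose proof (exp_pos (2 / 3 * ln (1 / 2))). pose proof (exp_pos (1 / 3 * ln 2)). lra.
Qed.

(* The minimiser over t > 0 of alpha t^2 a^2 + beta b / t, namely (beta b / (2 alpha a^2))^(1/3). *)
Definition rescale_factor (alpha beta a b : R) : R :=
  exp ((ln (beta * b) - ln 2 - ln (alpha * a ^ 2)) / 3).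

Lemma rescale_cost alpha beta a b :
  0 < alpha -> 0 < beta -> 0 < a -> 0 < b ->
  let t := rescale_factor alpha beta a b in
  alpha * (t * a) ^ 2 + beta * (b / t)
  = C21 * Rpower (alpha * a ^ 2) (1/3) * Rpower (beta * b) (2/3).
Proof.
  intros Hal Hbe Ha Hb t.
  assert (Hx : 0 < alpha * a ^ 2) by (apply Rmult_lt_0_compat; [lra | apply pow_lt; lra]).
  assert (Hy : 0 < beta * b) by (apply Rmult_lt_0_compat; lra).
  set (x := ln (alpha * a ^ 2)). set (z := ln (beta * b)). set (l2 := ln 2).
  assert (E1 : alpha * (t * a) ^ 2 = exp (x / 3 + 2 * z / 3 + - (2 * l2 / 3))).
  { replace (x / 3 + 2 * z / 3 + - (2 * l2 / 3)) with (x + ((z - l2 - x) / 3 + (z - l2 - x) / 3))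
      by field.
    rewrite !exp_plus. unfold x. rewrite exp_ln by auto.
    unfold t, rescale_factor. fold x z l2. ring. }
  assert (E2 : beta * (b / t) = exp (x / 3 + 2 * z / 3 + l2 / 3)).
  { replace (x / 3 + 2 * z / 3 + l2 / 3) with (z + - ((z - l2 - x) / 3)) by field.
    rewrite exp_plus, exp_Ropp. unfold z at 1. rewrite exp_ln by auto.
    unfold t, rescale_factor. fold x z l2. field. apply Rgt_not_eq, exp_pos. }
  assert (EC : C21 = exp (- (2 * l2 / 3)) + exp (l2 / 3)).
  { unfold C21, Rpower, l2. replace (1 / 2) with (/ 2) by field. rewrite ln_Rinv by lra.
    f_equal; f_equal; field. }
  rewrite E1, E2, EC. unfold Rpower. fold x z. rewrite !exp_plus.
  replace (2 / 3 * z) with (2 * z / 3) by field. replace (1 / 3 * x) with (x / 3) by field. ring.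
Qed.

Lemma rescale_cost_le alpha beta s a b w :
  0 < alpha -> 0 < beta -> 0 < a -> 0 < b -> b <= sqrt s * w ->
  let t := rescale_factor alpha beta a b in
  alpha * (t * a) ^ 2 + beta * (b / t)
  <= C21 * Rpower (alpha * beta ^ 2) (1/3) * Rpower s (1/3) * Rpower (a * w) (2/3).
Proof.
  intros Hal Hbe Ha Hb Hbw t. unfold t. rewrite rescale_cost by auto.
  assert (Hs : 0 < sqrt s).
  { destruct (Rle_lt_dec (sqrt s) 0) as [H|H]; auto. pose proof (sqrt_pos s).
    replace (sqrt s) with 0 in Hbw by lra. lra. }
  assert (Hw : 0 < w) by (destruct (Rle_lt_dec w 0); auto; nra).
  pose proof C21_pos.
  assert (Hmono : Rpower (beta * b) (2/3) <= Rpower (beta * (sqrt s * w)) (2/3)).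
  { apply Rle_Rpower_l; [lra|]. split; [nra|]. apply Rmult_le_compat_l; lra. }
  assert (Hlns : ln s = 2 * ln (sqrt s)).
  { rewrite <- (sqrt_sqrt s) at 1 by (apply Rlt_le, sqrt_lt_0_alt; rewrite sqrt_0; auto).
    rewrite ln_mult by auto. ring. }
  replace (C21 * Rpower (alpha * beta ^ 2) (1/3) * Rpower s (1/3) * Rpower (a * w) (2/3))
    with (C21 * Rpower (alpha * a ^ 2) (1/3) * Rpower (beta * (sqrt s * w)) (2/3)).
  - apply Rmult_le_compat_l; auto.
    apply Rmult_le_pos; [lra | left; apply exp_pos].
  - unfold Rpower. rewrite !Rmult_assoc, <- !exp_plus. do 2 f_equal.
    simpl pow. rewrite !Rmult_1_r, Hlns, !ln_mult by (auto; nra). field.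
Qed.

Lemma penalty_constant_pos alpha beta s :
  0 < C21 * Rpower (alpha * beta ^ 2) (1/3) * Rpower s (1/3).
Proof. repeat apply Rmult_lt_0_compat; try apply exp_pos. apply C21_pos. Qed.

Section Rescaling.

Variables (n1 n2 : nat) (alpha beta : R).

Let positive_term (u v : nat -> R) := Rlt_dec 0 (norm2 n1 u * norm2 n2 v).
Let factor (u v : nat -> R) := rescale_factor alpha beta (norm2 n1 u) (norm1 n2 v).

Definition rescale_left (u v : nat -> R) : nat -> R :=
  fun i => if positive_term u v then factor u v * u i else 0.
Definition rescale_right (u v : nat -> R) : nat -> R :=
  fun j => if positive_term u v then v j / factor u v else 0.

Lemma rescale_outer u v i j :
  (i < n1)%nat -> (j < n2)%nat -> rescale_left u v i * rescale_right u v j = u i * v j.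
Proof.
  intros Hi Hj. unfold rescale_left, rescale_right.
  destruct (positive_term u v) as [Hp|Hp].
  - unfold factor, rescale_factor. field. apply Rgt_not_eq, exp_pos.
  - pose proof (norm2_nonneg n1 u). pose proof (norm2_nonneg n2 v).
    destruct (Rmult_integral (norm2 n1 u) (norm2 n2 v)) as [Hu|Hv]; [nra | |].
    + rewrite (norm2_eq0 n1 u i Hu Hi). ring.
    + rewrite (norm2_eq0 n2 v j Hv Hj). ring.
Qed.

Lemma rescale_penalty_le s u v :
  0 < alpha -> 0 < beta -> norm1 n2 v <= sqrt s * norm2 n2 v ->
  alpha * norm2 n1 (rescale_left u v) ^ 2 + beta * norm1 n2 (rescale_right u v)
  <= C21 * Rpower (alpha * beta ^ 2) (1/3) * Rpower s (1/3)
     * rpow (norm2 n1 u * norm2 n2 v) (2/3).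
Proof.
  intros Hal Hbe Hv. unfold rescale_left, rescale_right, rpow.
  destruct (positive_term u v) as [Hp|Hp].
  - destruct (Rle_dec (norm2 n1 u * norm2 n2 v) 0) as [Hn|_]; [lra|].
    pose proof (norm2_nonneg n1 u). pose proof (norm2_nonneg n2 v).
    pose proof (norm2_le_norm1 n2 v).
    assert (Hf : 0 < factor u v) by apply exp_pos.
    rewrite norm2_scal, norm1_div, Rabs_right by lra.
    unfold factor. apply rescale_cost_le; auto; nra.
  - rewrite norm2_zero_vec, norm1_zero_vec.
    pose proof (penalty_constant_pos alpha beta s).
    destruct (Rle_dec _ 0); [lra|]. pose proof (exp_pos (2/3 * ln (norm2 n1 u * norm2 n2 v))).
    unfold Rpower. nra.
Qed.

End Rescaling.

Lemma J_rescaled_ground_truth_le m n1 n2 Rk a alpha beta s hU hV eta B :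
  0 < alpha -> 0 < beta ->
  (forall r, (r < Rk)%nat -> norm1 n2 (hV r) <= sqrt s * norm2 n2 (hV r)) ->
  fsum Rk (fun r => rpow (norm2 n1 (hU r) * norm2 n2 (hV r)) (2/3)) <= B ->
  let y := fun k => Aop n1 n2 a (outer_sum Rk hU hV) k + eta k in
  J m n1 n2 Rk a y alpha beta
    (fun r => rescale_left n1 n2 alpha beta (hU r) (hV r))
    (fun r => rescale_right n1 n2 alpha beta (hU r) (hV r))
  <= norm2 m eta ^ 2 + C21 * Rpower (alpha * beta ^ 2) (1/3) * Rpower s (1/3) * B.
Proof.
  intros Hal Hbe HhV HB y. pose proof (penalty_constant_pos alpha beta s).
  apply Rle_trans with (norm2 m eta ^ 2 + C21 * Rpower (alpha * beta ^ 2) (1/3) * Rpower s (1/3)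
    * fsum Rk (fun r => rpow (norm2 n1 (hU r) * norm2 n2 (hV r)) (2/3)));
    [|apply Rplus_le_compat_l, Rmult_le_compat_l; lra].
  unfold J.
  rewrite (Aop_ext n1 n2 a _ (outer_sum Rk hU hV)).
  - rewrite (functional_extensionality (fun k => y k - Aop n1 n2 a (outer_sum Rk hU hV) k) eta)
      by (intros; unfold y; ring).
    rewrite <- !fsum_mult_l, Rplus_assoc, <- fsum_plus. apply Rplus_le_compat_l.
    apply fsum_le. intros r Hr. apply rescale_penalty_le; auto.
  - intros i j Hi Hj. unfold outer_sum. apply fsum_ext. intros. apply rescale_outer; auto.
Qed.

(** * The error estimate *)

Lemma le_of_quadratic_le q e d :
  0 <= q -> 0 <= e -> 0 <= d -> q ^ 2 - 2 * q * e <= d ^ 2 -> q <= 2 * e + d.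
Proof.
  intros Hq He Hd H. enough (q - e <= e + d) by lra.
  apply le_of_pow2_le; [lra | nra].
Qed.

Lemma rpow_nonneg x p : 0 <= rpow x p.
Proof. unfold rpow. destruct (Rle_dec x 0); [lra | left; apply exp_pos]. Qed.

Lemma error_constant_sq alpha beta s Rk cU Nhat :
  0 < alpha -> 0 < beta -> 0 < s -> 0 < cU ->
  (sqrt (rpow s (1/3) * rpow (INR Rk) (2/3) * C21 * cU)
   * rpow (alpha * beta ^ 2) (1/6) * rpow Nhat (1/3)) ^ 2
  = C21 * Rpower (alpha * beta ^ 2) (1/3) * Rpower s (1/3)
    * (cU * rpow (INR Rk) (2/3) * rpow Nhat (2/3)).
Proof.
  intros Hal Hbe Hs HcU.
  assert (Hsq : forall x p, rpow x p ^ 2 = rpow x (2 * p)).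
  { intros x p. unfold rpow. destruct (Rle_dec x 0); [simpl; ring|].
    simpl. rewrite Rmult_1_r, <- Rpower_plus. f_equal. ring. }
  assert (Hpos : forall x p, 0 < x -> rpow x p = Rpower x p).
  { intros x p Hx. unfold rpow. destruct (Rle_dec x 0); [lra | auto]. }
  pose proof C21_pos.
  rewrite !Rpow_mult_distr, !Hsq, pow2_sqrt.
  - rewrite (Hpos s), (Hpos (alpha * beta ^ 2))
      by (lra || (apply Rmult_lt_0_compat; [lra | apply pow_lt; lra])).
    replace (2 * (1/6)) with (1/3) by field. replace (2 * (1/3)) with (2/3) by field. ring.
  - pose proof (rpow_nonneg s (1/3)). pose proof (rpow_nonneg (INR Rk) (2/3)).
    repeat apply Rmult_le_pos; lra.
Qed.

Theorem mainTheorem6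
  (m n1 n2 Rk : nat) (alpha beta Gamma s gamma c delta : R)
  (a : nat -> nat -> nat -> R)
  (hU hV : nat -> nat -> R) (cU Nhat : R) (eta : nat -> R)
  (U V : nat -> nat -> R) :
  0 < alpha -> 0 < beta -> 1 <= Gamma -> (1 <= Rk)%nat ->
  1 <= s -> s <= INR n2 -> 0 < gamma -> 1 <= c ->
  0 < delta -> delta < 1 ->
  RIP m n1 n2 a (2 * Rk) (INR n1) (Rmax s ((gamma / beta) ^ 2)) ((c + 1) * Gamma) delta ->
  has_rank n1 n2 (outer_sum Rk hU hV) Rk ->
  (forall r, (r < Rk)%nat -> norm1 n2 (hV r) <= sqrt s * norm2 n2 (hV r)) ->
  fsum Rk (fun r => norm2 n1 (hU r) ^ 2 * norm2 n2 (hV r) ^ 2) <= Gamma ^ 2 ->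
  is_schatten n1 n2 (outer_sum Rk hU hV) (2/3) Nhat ->
  0 < cU ->
  fsum Rk (fun r => rpow (norm2 n1 (hU r) * norm2 n2 (hV r)) (2/3))
    <= cU * rpow (INR Rk) (2/3) * rpow Nhat (2/3) ->
  let Xhat := outer_sum Rk hU hV in
  let y := fun k => Aop n1 n2 a Xhat k + eta k in
  (forall U' V' : nat -> nat -> R,
     J m n1 n2 Rk a y alpha beta U V <= J m n1 n2 Rk a y alpha beta U' V') ->
  (forall r, (r < Rk)%nat ->
     norm2 n2 (V r) >= (frob n1 n2 Xhat + norm2 m eta + sqrt delta) ^ 2 / gamma) ->
  sqrt (fsum Rk (fun r => (norm2 n1 (U r) * norm2 n2 (V r)) ^ 2)) <= c * Gamma ->
  let X := outer_sum Rk U V in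
  frob n1 n2 (fun i j => Xhat i j - X i j)
    <= sqrt (rpow s (1/3) * rpow (INR Rk) (2/3) * C21 * cU)
       * rpow (alpha * beta ^ 2) (1/6) * rpow Nhat (1/3)
       + 2 * norm2 m eta + sqrt delta
  /\ inKR n1 n2 Rk (c * Gamma) (INR n1) ((gamma / beta) ^ 2) X
  /\ (forall r, (r < Rk)%nat ->
        inK n2 ((gamma / beta) ^ 2) (fun j => V r j / norm2 n2 (V r))).
Proof.
  intros Hal Hbe HGam HRk Hs Hsn2 Hgam Hc Hdel _ HRIP Hrank HhV HGhat _ HcU HcUb Xhat y
    Hmin Hlow Hsig X.
  assert (Hn2 : (1 <= n2)%nat) by (destruct n2; [simpl in Hsn2; lra | lia]).
  pose proof (has_rank_rows_pos _ _ _ _ Hrank HRk) as Hn1.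
  set (F := frob n1 n2 Xhat). set (E := norm2 m eta). set (sd := sqrt delta).
  assert (Hsd : 0 < sd) by (apply sqrt_lt_R0; lra).
  assert (HE : 0 <= E) by apply norm2_nonneg.
  assert (HcG : Gamma <= (c + 1) * Gamma) by nra.
  assert (Hratio : sqrt ((gamma / beta) ^ 2) = gamma / beta)
    by (apply sqrt_pow2, Rlt_le, Rdiv_lt_0_compat; auto).
  assert (HXhat : inKR n1 n2 Rk Gamma (INR n1) s Xhat).
  { apply inKR_outer_sum; auto. rewrite <- (sqrt_pow2 Gamma) by lra. apply sqrt_le_1_alt.
    rewrite (fsum_ext Rk _ (fun r => norm2 n1 (hU r) ^ 2 * norm2 n2 (hV r) ^ 2)); auto.
    intros; ring. }
  assert (Hy : norm2 m y <= F + E + sd).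
  { assert (norm2 m (Aop n1 n2 a Xhat) <= F + sd).
    { apply (RIP_norm2_le _ HRIP); [lra|].
      apply inKR_double_rank, (inKR_mono _ _ _ Gamma _ _ s); auto using Rmax_l. }
    pose proof (norm2_triangle m (Aop n1 n2 a Xhat) eta). unfold y, E in *. lra. }
  assert (HV : forall r, (r < Rk)%nat ->
            0 < norm2 n2 (V r) /\ norm1 n2 (V r) <= sqrt ((gamma / beta) ^ 2) * norm2 n2 (V r)).
  { intros r Hr. rewrite Hratio. assert (0 <= F) by apply sqrt_pos.
    apply (minimizer_factor_sparse m n1 n2 Rk a y alpha beta Hal Hbe U V gamma (F + E + sd));
      auto; lra. }
  assert (HX : inKR n1 n2 Rk (c * Gamma) (INR n1) ((gamma / beta) ^ 2) X).
  { apply inKR_outer_sum; auto; [|intros r Hr; apply HV; auto].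
    destruct (HV 0%nat) as [Hpos Hle]; [lia|]. rewrite Hratio in Hle.
    pose proof (one_le_of_norm1_le_mul_norm2 n2 (V 0%nat) _ Hpos Hle). nra. }
  assert (Herr : frob n1 n2 (fun i j => Xhat i j - X i j)
                 <= norm2 m (Aop n1 n2 a (fun i j => Xhat i j - X i j)) + sd).
  { apply (RIP_norm2_le _ HRIP); [lra|].
    replace ((c + 1) * Gamma) with (Gamma + c * Gamma) by ring.
    apply inKR_sub.
    - apply (inKR_mono _ _ _ Gamma _ _ s); auto using Rle_refl, Rmax_l.
    - apply (inKR_mono _ _ _ (c * Gamma) _ _ ((gamma / beta) ^ 2)); auto using Rle_refl, Rmax_r. }
  assert (HJ : J m n1 n2 Rk a y alpha beta U V
               <= E ^ 2 + C21 * Rpower (alpha * beta ^ 2) (1/3) * Rpower s (1/3)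
                          * (cU * rpow (INR Rk) (2/3) * rpow Nhat (2/3)))
    by (eapply Rle_trans; [apply Hmin | apply J_rescaled_ground_truth_le; auto]).
  pose proof (error_image_quadratic_le m n1 n2 Rk a y alpha beta Hal Hbe U V Xhat eta _
                (fun k => eq_refl) HJ) as Hquad.
  cbv zeta in Hquad. fold X E in Hquad. rewrite <- error_constant_sq in Hquad by lra.
  apply le_of_quadratic_le in Hquad; [| apply norm2_nonneg | auto |].
  - split; [|split]; auto; [fold sd; lra|].
    intros r Hr. destruct (HV r Hr). apply inK_div_norm2; auto.
  - repeat apply Rmult_le_pos; auto using sqrt_pos, rpow_nonneg.
Qed.
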